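(* Let $T>0$ and $0<\delta<\min\{1,T/2\}$, let $3\delta\le z\le T-3\delta$ and let $f\in C^1([0,T]\setminus\{z\})$. Define $\alpha=\ln(1/\delta^3)/\delta$, $\gamma=\frac{1}{2\sigma(\alpha\delta)}$ with $\sigma=\tanh$, and $\chi_\delta(t)=\gamma\bigl(\sigma(\alpha(t-2\delta))-\sigma(\alpha(t-T+2\delta))\bigr)$. Then $$\Bigl|\int_0^T f(t)\chi_\delta'(t)\,dt-f(2\delta)+f(T-2\delta)\Bigr|\le\Bigl(T\|f\|_{L^\infty([0,T])}+3\ln(1/\delta)\|f'\|_{L^\infty(B)}\Bigr)\frac{4\delta}{1-\delta},$$ where $B=[\delta,3\delta]\cup[T-3\delta,T-\delta]$. *)

From Stdlib Require Import Reals.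
From Coquelicot Require Import Coquelicot.
Open Scope R_scope.

Definition sigma (x : R) : R := tanh x.

Definition alpha_d (delta : R) : R := ln (1 / delta ^ 3) / delta.
Definition gamma_d (delta : R) : R := 1 / (2 * sigma (alpha_d delta * delta)).

Definition chi (T delta : R) (t : R) : R :=
  gamma_d delta * (sigma (alpha_d delta * (t - 2 * delta))
                   - sigma (alpha_d delta * (t - T + 2 * delta))).

(* Derivative of f at t relative to a set D (one-sided at endpoints of an
   interval): limit of the difference quotient as y -> t, y in D, y <> t. *)
Definition has_deriv_within (D : R -> Prop) (f : R -> R) (t l : R) : Prop :=
  filterlim (fun y => (f y - f t) / (y - t))
            (within (fun y => D y /\ y <> t) (locally t)) (locally l).

Definition C1_on (D : R -> Prop) (f f' : R -> R) : Prop :=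
  (forall t, D t -> has_deriv_within D f t (f' t)) /\
  (forall t, D t -> filterlim f' (within D (locally t)) (locally (f' t))).

Definition punct_interval (T z : R) (t : R) : Prop := 0 <= t <= T /\ t <> z.

Definition setB (T delta : R) (t : R) : Prop :=
  (delta <= t <= 3 * delta) \/ (T - 3 * delta <= t <= T - delta).

(* The derivative of [chi T delta] is the difference of two bumps
   [gamma alpha (1 - tanh (alpha (t - p)) ^ 2)] centred at [p = 2 delta] and
   [p = T - 2 delta], each the derivative of the step [gamma tanh (alpha (t - p))],
   which by the choice of [gamma] rises by exactly 1 across [(p - delta, p + delta)].
   So [int f * bump - f p] splits into a middle part, bounded by the oscillation of
   [f] on [(p - delta, p + delta)], a subset of [B], hence by [delta ||f'||], and two
   tails weighted by the remaining rise [2 gamma (1 - tanh (alpha delta))], which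
   equals [2 delta^6 / (1 - delta^6)].  The possible jump of [f] at [z] does not
   spoil integrability: cutting out a shrinking neighbourhood of [z] changes a
   bounded integrand by step functions of arbitrarily small integral.  The stated
   bound then follows from [delta^6 <= T delta] and [1 - delta <= ln (1 / delta)]. *)

From Pilot Require Import Defs.
From Stdlib Require Import Reals Lra Lia.
From Coquelicot Require Import Coquelicot.
Open Scope R_scope.

Definition box (c d K t : R) : R :=
  if Rlt_dec c t then if Rlt_dec t d then K else 0 else 0.

Lemma adapted_couple_box (a b c d K : R) : a <= c -> c <= d -> d <= b ->
  adapted_couple (box c d K) a b (a :: c :: d :: b :: nil) (0 :: K :: 0 :: nil).
Proof.
  intros Hac Hcd Hdb; repeat split.
  - intros i Hi; destruct i as [|[|[|i]]]; simpl in *; lra || lia.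
  - simpl; rewrite Rmin_left; lra.
  - simpl; rewrite Rmax_right; lra.
  - intros i Hi x Hx; unfold box.
    destruct i as [|[|[|i]]]; simpl in *; try lia;
      unfold open_interval in Hx; repeat destruct Rlt_dec; lra.
Qed.

Definition box_SF (a b c d K : R) (Hac : a <= c) (Hcd : c <= d) (Hdb : d <= b) : StepFun a b :=
  mkStepFun (existT _ _ (existT _ _ (adapted_couple_box a b c d K Hac Hcd Hdb))).

Lemma RiemannInt_SF_box a b c d K Hac Hcd Hdb :
  RiemannInt_SF (box_SF a b c d K Hac Hcd Hdb) = K * (d - c).
Proof. unfold RiemannInt_SF; simpl; destruct Rle_dec; [simpl; ring | lra]. Qed.

Lemma ex_RInt_of_box_perturbation (g : R -> R) (h : R -> R -> R) (a b z K eta0 : R) :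
  0 < eta0 -> a <= z - eta0 -> z + eta0 <= b -> 0 <= K ->
  (forall eta, 0 < eta <= eta0 -> ex_RInt (h eta) a b) ->
  (forall eta, 0 < eta <= eta0 -> forall t, a <= t <= b ->
     Rabs (g t - h eta t) <= box (z - eta) (z + eta) K t) ->
  ex_RInt g a b.
Proof.
  intros Heta0 Ha Hb HK Hh Hgh. apply ex_RInt_Reals_1. intros [eps Heps].
  set (eta := Rmin eta0 (eps / (4 * (K + 1)))).
  assert (Heta : 0 < eta <= eta0).
  { split; [apply Rmin_pos; [lra | apply Rdiv_lt_0_compat; lra] | apply Rmin_l]. }
  assert (Heta_eps : 4 * (K + 1) * eta <= eps).
  { assert (Heta_le : eta <= eps / (4 * (K + 1))) by apply Rmin_r.
    apply Rmult_le_reg_r with (/ (4 * (K + 1))); [apply Rinv_0_lt_compat; lra |].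
    replace (4 * (K + 1) * eta * / (4 * (K + 1))) with eta by (field; lra). exact Heta_le. }
  assert (He2 : 0 < eps / 2) by lra.
  destruct (ex_RInt_Reals_0 _ _ _ (Hh eta Heta) (mkposreal _ He2)) as [phi [psi [Hpsi Hint]]].
  assert (Hc1 : a <= z - eta) by lra.
  assert (Hc2 : z - eta <= z + eta) by lra.
  assert (Hc3 : z + eta <= b) by lra.
  exists phi, (mkStepFun (StepFun_P28 1 psi (box_SF a b _ _ K Hc1 Hc2 Hc3))).
  rewrite Rmin_left, Rmax_right in * by lra. split.
  - intros t Ht; simpl.
    specialize (Hpsi t Ht); specialize (Hgh eta Heta t Ht).
    replace (g t - phi t) with ((g t - h eta t) + (h eta t - phi t)) by ring.
    eapply Rle_trans; [apply Rabs_triang | lra].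
  - rewrite StepFun_P30, RiemannInt_SF_box; simpl in Hint.
    rewrite Rmult_1_l.
    eapply Rle_lt_trans; [apply Rabs_triang |].
    replace (K * (z + eta - (z - eta))) with (2 * K * eta) by ring.
    rewrite (Rabs_right (2 * K * eta)) by (apply Rle_ge, Rmult_le_pos; lra). simpl; lra.
Qed.

Lemma ball_Rabs (x e y : R) : ball x e y <-> Rabs (y - x) < e.
Proof. reflexivity. Qed.

Lemma has_deriv_within_continuous (D : R -> Prop) (f : R -> R) (t l : R) :
  D t -> has_deriv_within D f t l ->
  filterlim f (within D (locally t)) (locally (f t)).
Proof.
  intros Dt Hder P [eps HP].
  destruct (Hder (fun q => Rabs (q - l) < 1)) as [d Hd].
  { exists (mkposreal 1 Rlt_0_1). intros y Hy. exact Hy. }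
  assert (HL : 0 < Rabs l + 1) by (generalize (Rabs_pos l); lra).
  assert (Hr : 0 < Rmin d (eps / (Rabs l + 1))).
  { apply Rmin_pos; [apply cond_pos | apply Rdiv_lt_0_compat; [apply cond_pos | lra]]. }
  exists (mkposreal _ Hr). intros y Hy Dy. apply HP, ball_Rabs.
  apply ball_Rabs in Hy; simpl in Hy.
  destruct (Req_dec y t) as [-> | Hne].
  { rewrite Rminus_diag, Rabs_R0. apply cond_pos. }
  assert (Hyd : Rabs (y - t) < d) by (eapply Rlt_le_trans; [exact Hy | apply Rmin_l]).
  assert (Hye : Rabs (y - t) < eps / (Rabs l + 1))
    by (eapply Rlt_le_trans; [exact Hy | apply Rmin_r]).
  specialize (Hd y Hyd (conj Dy Hne)); simpl in Hd.
  assert (Hq : Rabs ((f y - f t) / (y - t)) < Rabs l + 1).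
  { replace ((f y - f t) / (y - t)) with (((f y - f t) / (y - t) - l) + l) by ring.
    eapply Rle_lt_trans; [apply Rabs_triang | lra]. }
  replace (f y - f t) with ((f y - f t) / (y - t) * (y - t)) by (field; lra).
  rewrite Rabs_mult.
  apply Rle_lt_trans with ((Rabs l + 1) * Rabs (y - t)).
  { apply Rmult_le_compat_r; [apply Rabs_pos | lra]. }
  apply Rmult_lt_reg_l with (/ (Rabs l + 1)); [apply Rinv_0_lt_compat; lra |].
  replace (/ (Rabs l + 1) * ((Rabs l + 1) * Rabs (y - t))) with (Rabs (y - t)) by (field; lra).
  replace (/ (Rabs l + 1) * eps) with (eps / (Rabs l + 1)) by (field; lra).
  exact Hye.
Qed.

Lemma has_deriv_within_is_derive (D : R -> Prop) (f : R -> R) (u v x l : R) :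
  u < x < v -> (forall y, u < y < v -> D y) ->
  has_deriv_within D f x l -> is_derive f x l.
Proof.
  intros Hx HD Hder. apply is_derive_Reals. intros eps Heps.
  destruct (Hder (fun q => Rabs (q - l) < eps)) as [d Hd].
  { exists (mkposreal eps Heps). intros y Hy. exact Hy. }
  assert (Hr : 0 < Rmin d (Rmin (x - u) (v - x))).
  { apply Rmin_pos; [apply cond_pos | apply Rmin_pos; lra]. }
  exists (mkposreal _ Hr). intros h Hh0 Hh; simpl in Hh.
  assert (Hhd : Rabs h < d) by (eapply Rlt_le_trans; [exact Hh | apply Rmin_l]).
  assert (Hh2 : Rabs h < Rmin (x - u) (v - x)) by (eapply Rlt_le_trans; [exact Hh | apply Rmin_r]).
  assert (Hhu : Rabs h < x - u) by (eapply Rlt_le_trans; [exact Hh2 | apply Rmin_l]).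
  assert (Hhv : Rabs h < v - x) by (eapply Rlt_le_trans; [exact Hh2 | apply Rmin_r]).
  apply Rabs_lt_between in Hhu, Hhv.
  assert (Hball : ball x d (x + h)) by (apply ball_Rabs; replace (x + h - x) with h by ring; exact Hhd).
  assert (Hxh : x + h <> x) by (intro E; apply Hh0; lra).
  specialize (Hd (x + h) Hball (conj (HD (x + h) ltac:(lra)) Hxh)).
  simpl in Hd. replace (x + h - x) with h in Hd by ring. exact Hd.
Qed.

Lemma Rabs_sub_le_of_derive_bound (f f' : R -> R) (p d M : R) :
  (forall y, p - d < y < p + d -> is_derive f y (f' y) /\ Rabs (f' y) <= M) ->
  forall x, p - d < x < p + d -> Rabs (f x - f p) <= M * d.
Proof.
  intros Hf x Hx.
  assert (HM : 0 <= M) by (eapply Rle_trans; [apply Rabs_pos | apply (Hf p); lra]).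
  apply Rle_trans with (M * Rabs (x - p)).
  - apply bounded_variation with f'. intros y Hy. apply Hf.
    apply Rabs_lt_between'. eapply Rle_lt_trans; [exact Hy |].
    apply Rabs_lt_between'; exact Hx.
  - apply Rmult_le_compat_l; [exact HM |]. apply Rabs_le_between; lra.
Qed.

Lemma filterlim_within_mult (D : R -> Prop) (f g : R -> R) (t : R) :
  filterlim f (within D (locally t)) (locally (f t)) ->
  continuous g t ->
  filterlim (fun x => f x * g x) (within D (locally t)) (locally (f t * g t)).
Proof.
  intros Hf Hg.
  apply (filterlim_comp_2 (G := locally (f t)) (H := locally (g t)) f g Rmult Hf).
  - eapply filterlim_filter_le_1; [apply filter_le_within | exact Hg].
  - exact (filterlim_scal (K := R_AbsRing) (V := R_NormedModule) (f t) (g t)).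
Qed.

Definition clamp (a b x : R) : R := Rmax a (Rmin b x).

Lemma clamp_between (a b x : R) : a <= b -> a <= clamp a b x <= b.
Proof. intros; unfold clamp, Rmax, Rmin; repeat destruct Rle_dec; lra. Qed.

Lemma clamp_id (a b x : R) : a <= x <= b -> clamp a b x = x.
Proof. intros; unfold clamp, Rmax, Rmin; repeat destruct Rle_dec; lra. Qed.

Lemma clamp_lipschitz (a b x y : R) :
  a <= b -> Rabs (clamp a b y - clamp a b x) <= Rabs (y - x).
Proof.
  intros; unfold clamp, Rmax, Rmin; repeat destruct Rle_dec;
    unfold Rabs; repeat destruct Rcase_abs; lra.
Qed.

(* [g] agrees on [a, b] with [g \o clamp a b], which is continuous on all of [R]. *)
Lemma ex_RInt_continuous_within (D : R -> Prop) (g : R -> R) (a b : R) :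
  a <= b -> (forall t, a <= t <= b -> D t) ->
  (forall t, D t -> filterlim g (within D (locally t)) (locally (g t))) ->
  ex_RInt g a b.
Proof.
  intros Hab HD Hg.
  apply ex_RInt_ext with (fun x => g (clamp a b x)).
  { intros x Hx. rewrite Rmin_left, Rmax_right in Hx by lra. rewrite clamp_id; lra. }
  apply (ex_RInt_continuous (V := R_CompleteNormedModule)). intros x _.
  assert (Hcx := HD _ (clamp_between a b x Hab)).
  apply filterlim_comp with (within D (locally (clamp a b x))); [| exact (Hg _ Hcx)].
  intros P [e HP]. exists e. intros y Hy. apply HP.
  - apply ball_Rabs. eapply Rle_lt_trans; [apply clamp_lipschitz; exact Hab | exact Hy].
  - apply HD, clamp_between, Hab.
Qed.

Lemma ex_RInt_punctured (D : R -> Prop) (g : R -> R) (a b z K : R) :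
  a < z < b -> (forall t, a <= t <= b -> t <> z -> D t) ->
  (forall t, D t -> filterlim g (within D (locally t)) (locally (g t))) ->
  (forall t, a <= t <= b -> Rabs (g t) <= K) ->
  ex_RInt g a b.
Proof.
  intros Hz HD Hg HK.
  assert (K_ge0 : 0 <= K) by (eapply Rle_trans; [apply Rabs_pos | apply (HK a); lra]).
  set (cut_out := fun eta t =>
         if Rlt_dec (z - eta) t then if Rlt_dec t (z + eta) then 0 else g t else g t).
  set (eta0 := Rmin (z - a) (b - z) / 2).
  assert (Heta0 : 0 < eta0 /\ eta0 <= (z - a) / 2 /\ eta0 <= (b - z) / 2).
  { unfold eta0. generalize (Rmin_l (z - a) (b - z)) (Rmin_r (z - a) (b - z)).
    apply Rmin_case; lra. }
  apply (ex_RInt_of_box_perturbation g cut_out a b z K eta0); try lra.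
  - intros eta Heta.
    assert (Hg_on : forall u v, a <= u <= v -> v <= b -> (v < z \/ z < u) -> ex_RInt g u v).
    { intros u v Huv Hvb Hzuv. apply ex_RInt_continuous_within with D; auto; try lra.
      intros t Ht; apply HD; lra. }
    apply ex_RInt_Chasles with (z - eta); [| apply ex_RInt_Chasles with (z + eta)].
    + apply ex_RInt_ext with g; [| apply Hg_on; lra].
      intros x Hx; rewrite Rmin_left, Rmax_right in Hx by lra.
      unfold cut_out; destruct Rlt_dec; [lra | reflexivity].
    + apply ex_RInt_ext with (fun _ => 0); [| apply ex_RInt_const].
      intros x Hx; rewrite Rmin_left, Rmax_right in Hx by lra.
      unfold cut_out; do 2 (destruct Rlt_dec; [| lra]); reflexivity.
    + apply ex_RInt_ext with g; [| apply Hg_on; lra].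
      intros x Hx; rewrite Rmin_left, Rmax_right in Hx by lra.
      unfold cut_out; destruct Rlt_dec; [destruct Rlt_dec; [lra |] |]; reflexivity.
  - intros eta Heta t Ht. unfold cut_out, box.
    destruct Rlt_dec; [destruct Rlt_dec |];
      [rewrite Rminus_0_r; apply HK, Ht | rewrite Rminus_diag, Rabs_R0; lra ..].
Qed.

Lemma Rabs_RInt_le_RInt (h G : R -> R) (u v : R) :
  u <= v -> ex_RInt h u v -> ex_RInt G u v ->
  (forall x, u < x < v -> Rabs (h x) <= G x) -> Rabs (RInt h u v) <= RInt G u v.
Proof.
  intros Huv Hh HG Hbound. apply Rabs_le; split.
  - rewrite <- (RInt_opp (V := R_CompleteNormedModule)) by exact HG.
    apply RInt_le; auto.
    + apply (ex_RInt_opp (V := R_NormedModule)), HG.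
    + intros x Hx. specialize (Hbound x Hx); apply Rabs_le_between in Hbound; unfold opp; simpl; lra.
  - apply RInt_le; auto.
    intros x Hx. specialize (Hbound x Hx); apply Rabs_le_between in Hbound; lra.
Qed.

Section Weighted_integrals.

Variables (S s : R -> R).
Hypothesis S_deriv : forall t, is_derive S t (s t).
Hypothesis s_cont : forall t, continuous s t.
Hypothesis s_ge0 : forall t, 0 <= s t.

Lemma is_RInt_scal_weight (c u v : R) :
  is_RInt (fun t => c * s t) u v (c * (S v - S u)).
Proof.
  replace (c * (S v - S u)) with (minus (c * S v) (c * S u))
    by (unfold minus, plus, opp; simpl; ring).
  apply (is_RInt_derive (V := R_CompleteNormedModule) (fun t => c * S t)).
  - intros x _. apply (is_derive_scal S), S_deriv.
  - intros x _. apply (continuous_scal_r (K := R_AbsRing) (V := R_NormedModule)), s_cont.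
Qed.

Lemma RInt_weight_dev_le (f : R -> R) (c e u v : R) :
  u <= v -> ex_RInt (fun t => f t * s t) u v ->
  (forall x, u < x < v -> Rabs (f x - c) <= e) ->
  Rabs (RInt (fun t => f t * s t) u v - c * (S v - S u)) <= e * (S v - S u).
Proof.
  intros Huv Hfs Hdev.
  assert (Hcs : ex_RInt (fun t => c * s t) u v) by (eexists; apply is_RInt_scal_weight).
  rewrite <- (is_RInt_unique _ _ _ _ (is_RInt_scal_weight c u v)).
  rewrite <- (is_RInt_unique _ _ _ _ (is_RInt_scal_weight e u v)).
  rewrite <- (RInt_minus (V := R_CompleteNormedModule)) by assumption.
  apply Rabs_RInt_le_RInt; auto.
  - apply (ex_RInt_minus (V := R_NormedModule)); assumption.
  - eexists; apply is_RInt_scal_weight.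
  - intros x Hx. unfold minus, plus, opp; simpl.
    replace (f x * s x + - (c * s x)) with ((f x - c) * s x) by ring.
    rewrite Rabs_mult, (Rabs_pos_eq _ (s_ge0 x)).
    apply Rmult_le_compat_r; auto.
Qed.

Lemma RInt_weight_abs_le (f : R -> R) (z M u v : R) :
  u <= v -> ex_RInt (fun t => f t * s t) u v ->
  (forall x, u < x < v -> x <> z -> Rabs (f x) <= M) ->
  Rabs (RInt (fun t => f t * s t) u v) <= M * (S v - S u).
Proof.
  intros Huv Hfs Hbound.
  assert (Hdev : forall u' v', u <= u' <= v' -> v' <= v -> (v' <= z \/ z <= u') ->
    Rabs (RInt (fun t => f t * s t) u' v') <= M * (S v' - S u')).
  { intros u' v' Hu' Hv' Hz.
    assert (H := RInt_weight_dev_le f 0 M u' v').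
    rewrite Rmult_0_l, Rminus_0_r in H. apply H; try lra.
    - apply (ex_RInt_Chasles_2 (V := R_CompleteNormedModule)) with u; [lra |].
      apply (ex_RInt_Chasles_1 (V := R_CompleteNormedModule)) with v; [lra | exact Hfs].
    - intros x Hx. rewrite Rminus_0_r. apply Hbound; lra. }
  destruct (Rlt_dec u z) as [Huz | Huz]; [destruct (Rlt_dec z v) as [Hzv | Hzv] |];
    [| apply Hdev; lra | apply Hdev; lra].
  rewrite <- (RInt_Chasles _ u z v).
  - replace (M * (S v - S u)) with (M * (S z - S u) + M * (S v - S z)) by ring.
    eapply Rle_trans; [apply Rabs_triang |].
    apply Rplus_le_compat; apply Hdev; lra.
  - apply (ex_RInt_Chasles_1 (V := R_CompleteNormedModule)) with v; [lra | exact Hfs].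
  - apply (ex_RInt_Chasles_2 (V := R_CompleteNormedModule)) with u; [lra | exact Hfs].
Qed.

Lemma RInt_weight_concentration (f : R -> R) (z M e a b p d : R) :
  a <= p - d -> p - d <= p + d -> p + d <= b ->
  S (p + d) - S (p - d) = 1 ->
  ex_RInt (fun t => f t * s t) a b ->
  (forall x, a < x < b -> x <> z -> Rabs (f x) <= M) ->
  (forall x, p - d < x < p + d -> Rabs (f x - f p) <= e) ->
  Rabs (RInt (fun t => f t * s t) a b - f p)
    <= M * ((S (p - d) - S a) + (S b - S (p + d))) + e.
Proof.
  intros Ha Hd Hb Hmass Hfs HM Hclose.
  set (F := fun t => f t * s t).
  assert (HF : forall u v, a <= u <= v -> v <= b -> ex_RInt F u v).
  { intros u v Hu Hv.
    apply (ex_RInt_Chasles_2 (V := R_CompleteNormedModule)) with a; [lra |].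
    apply (ex_RInt_Chasles_1 (V := R_CompleteNormedModule)) with b; [lra | exact Hfs]. }
  rewrite <- (RInt_Chasles F a (p - d) b), <- (RInt_Chasles F (p - d) (p + d) b)
    by (apply HF; lra).
  assert (Hleft : Rabs (RInt F a (p - d)) <= M * (S (p - d) - S a)).
  { apply (RInt_weight_abs_le f z); [lra | apply HF; lra | intros; apply HM; lra]. }
  assert (Hright : Rabs (RInt F (p + d) b) <= M * (S b - S (p + d))).
  { apply (RInt_weight_abs_le f z); [lra | apply HF; lra | intros; apply HM; lra]. }
  assert (Hmid := RInt_weight_dev_le f (f p) e (p - d) (p + d) Hd
                    ltac:(apply HF; lra) Hclose).
  rewrite Hmass, !Rmult_1_r in Hmid.
  change plus with Rplus.
  replace (RInt F a (p - d) + (RInt F (p - d) (p + d) + RInt F (p + d) b) - f p)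
    with (RInt F a (p - d) + (RInt F (p - d) (p + d) - f p) + RInt F (p + d) b) by ring.
  eapply Rle_trans; [apply Rabs_triang |].
  eapply Rle_trans; [apply Rplus_le_compat_r, Rabs_triang |].
  unfold F in *; lra.
Qed.

End Weighted_integrals.

Lemma exp_add_exp_opp_pos (x : R) : 0 < exp x + exp (- x).
Proof. generalize (exp_pos x) (exp_pos (- x)); lra. Qed.

Lemma tanh_bounds (x : R) : -1 < tanh x < 1.
Proof.
  unfold tanh, sinh, cosh. generalize (exp_pos x) (exp_pos (- x)); intros.
  split; [apply Rmult_lt_reg_r with ((exp x + exp (- x)) / 2) |
          apply Rmult_lt_reg_l with ((exp x + exp (- x)) / 2)]; try lra;
    field_simplify; lra.
Qed.

Lemma tanh_opp (x : R) : tanh (- x) = - tanh x.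
Proof.
  unfold tanh, sinh, cosh. rewrite Ropp_involutive.
  generalize (exp_add_exp_opp_pos x); intro. field. lra.
Qed.

Lemma tanh_ln (y : R) : 0 < y -> tanh (ln y) = (y ^ 2 - 1) / (y ^ 2 + 1).
Proof.
  intro Hy. unfold tanh, sinh, cosh. rewrite exp_Ropp, exp_ln by exact Hy.
  field. split; [nra | lra].
Qed.

Lemma is_derive_tanh (x : R) : is_derive tanh x (1 - tanh x ^ 2).
Proof.
  unfold tanh, sinh, cosh. generalize (exp_add_exp_opp_pos x); intro Hc.
  auto_derive; [lra |]. field. lra.
Qed.

Definition tanh_step (a g p t : R) : R := g * tanh (a * (t - p)).
Definition tanh_pulse (a g p t : R) : R := g * a * (1 - tanh (a * (t - p)) ^ 2).

Lemma is_derive_tanh_step (a g p t : R) :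
  is_derive (tanh_step a g p) t (tanh_pulse a g p t).
Proof.
  replace (tanh_pulse a g p t) with (g * (a * (1 - tanh (a * (t - p)) ^ 2)))
    by (unfold tanh_pulse; ring).
  apply (is_derive_scal (fun t => tanh (a * (t - p)))).
  apply (is_derive_comp tanh (fun t => a * (t - p))); [apply is_derive_tanh |].
  auto_derive; [exact I | ring].
Qed.

Lemma continuous_tanh_pulse (a g p t : R) : continuous (tanh_pulse a g p) t.
Proof.
  apply (ex_derive_continuous (K := R_AbsRing) (V := R_NormedModule)).
  unfold tanh_pulse, tanh, sinh, cosh.
  generalize (exp_add_exp_opp_pos (a * (t - p))); intro Hc.
  auto_derive. replace (a * (t + - p)) with (a * (t - p)) by ring. lra.
Qed.

Lemma tanh_pulse_bounds (a g p t : R) :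
  0 <= g -> 0 <= a -> 0 <= tanh_pulse a g p t <= g * a.
Proof.
  intros Hg Ha. unfold tanh_pulse. destruct (tanh_bounds (a * (t - p))).
  assert (0 <= g * a) by (apply Rmult_le_pos; lra).
  split; [apply Rmult_le_pos |]; nra.
Qed.

Lemma Derive_chi (T delta t : R) :
  Derive (chi T delta) t
  = tanh_pulse (alpha_d delta) (gamma_d delta) (2 * delta) t
    - tanh_pulse (alpha_d delta) (gamma_d delta) (T - 2 * delta) t.
Proof.
  apply is_derive_unique.
  apply is_derive_ext with
    (fun t => minus (tanh_step (alpha_d delta) (gamma_d delta) (2 * delta) t)
                    (tanh_step (alpha_d delta) (gamma_d delta) (T - 2 * delta) t)).
  { intro u. unfold chi, tanh_step, Defs.sigma, minus, plus, opp; simpl.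
    replace (u - (T - 2 * delta)) with (u - T + 2 * delta) by ring. ring. }
  apply (is_derive_minus (tanh_step _ _ _) (tanh_step _ _ _)); apply is_derive_tanh_step.
Qed.

Section Delta_scaling.

Variable delta : R.
Hypothesis delta_pos : 0 < delta.
Hypothesis delta_lt1 : delta < 1.

Let delta_pow6_bounds : 0 < delta ^ 6 < 1.
Proof. split; [apply pow_lt; lra | apply pow_lt_1_compat; [lra | lia]]. Qed.

Lemma alpha_d_mul : alpha_d delta * delta = ln (1 / delta ^ 3).
Proof. unfold alpha_d. field. lra. Qed.

Lemma tanh_alpha_d : tanh (alpha_d delta * delta) = (1 - delta ^ 6) / (1 + delta ^ 6).
Proof.
  assert (0 < delta ^ 3) by (apply pow_lt; lra).
  rewrite alpha_d_mul, tanh_ln by (apply Rdiv_lt_0_compat; lra).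
  field. split; [lra |]. replace (delta ^ 6) with ((delta ^ 3) ^ 2) by ring. nra.
Qed.

Lemma alpha_d_pos : 0 < alpha_d delta.
Proof.
  apply Rmult_lt_reg_r with delta; [lra |]. rewrite Rmult_0_l, alpha_d_mul.
  rewrite <- ln_1. apply ln_increasing; [lra |].
  assert (delta ^ 3 < 1) by (apply pow_lt_1_compat; [lra | lia]).
  assert (0 < delta ^ 3) by (apply pow_lt; lra).
  apply Rmult_lt_reg_r with (delta ^ 3); [lra |]. field_simplify; lra.
Qed.

Lemma gamma_d_mass : 2 * gamma_d delta * tanh (alpha_d delta * delta) = 1.
Proof.
  unfold gamma_d, Defs.sigma. rewrite tanh_alpha_d.
  field. split; lra.
Qed.

Lemma gamma_d_pos : 0 < gamma_d delta.
Proof.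
  unfold gamma_d, Defs.sigma. rewrite tanh_alpha_d.
  apply Rdiv_lt_0_compat; [lra |].
  apply Rmult_lt_0_compat; [lra | apply Rdiv_lt_0_compat; lra].
Qed.

Lemma gamma_d_tail :
  2 * gamma_d delta * (1 - tanh (alpha_d delta * delta)) = 2 * delta ^ 6 / (1 - delta ^ 6).
Proof.
  unfold gamma_d, Defs.sigma. rewrite tanh_alpha_d.
  field. split; lra.
Qed.

End Delta_scaling.

Lemma ex_RInt_mult_tanh_pulse (T z M : R) (f f' : R -> R) (a g p : R) :
  0 < z < T ->
  (forall t, punct_interval T z t -> has_deriv_within (punct_interval T z) f t (f' t)) ->
  (forall t, punct_interval T z t -> Rabs (f t) <= M) ->
  0 <= g -> 0 <= a ->
  ex_RInt (fun t => f t * tanh_pulse a g p t) 0 T.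
Proof.
  intros Hz Hder HM Hg Ha.
  apply (ex_RInt_punctured (punct_interval T z) _ 0 T z ((Rabs (f z) + M) * (g * a))).
  - exact Hz.
  - intros t Ht Htz; split; assumption.
  - intros t Ht. apply filterlim_within_mult; [| apply continuous_tanh_pulse].
    exact (has_deriv_within_continuous _ _ _ _ Ht (Hder t Ht)).
  - intros t Ht. rewrite Rabs_mult.
    destruct (tanh_pulse_bounds a g p t Hg Ha) as [Hp0 Hp1].
    rewrite (Rabs_pos_eq _ Hp0).
    apply Rmult_le_compat; [apply Rabs_pos | exact Hp0 | | exact Hp1].
    assert (HM0 : 0 <= M).
    { eapply Rle_trans; [apply Rabs_pos | apply (HM 0)]. split; lra. }
    generalize (Rabs_pos (f z)); intro.
    destruct (Req_dec t z) as [-> | Htz]; [| specialize (HM t (conj Ht Htz))]; lra.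
Qed.

Lemma RInt_tanh_pulse_concentration (T z delta p M1 M2 : R) (f f' : R -> R) :
  0 < delta < 1 -> 0 <= p - delta -> p + delta <= T ->
  (z <= p - delta \/ p + delta <= z) ->
  (forall t, punct_interval T z t -> has_deriv_within (punct_interval T z) f t (f' t)) ->
  (forall t, punct_interval T z t -> Rabs (f t) <= M1) -> 0 <= M1 ->
  (forall t, p - delta < t < p + delta -> Rabs (f' t) <= M2) ->
  ex_RInt (fun t => f t * tanh_pulse (alpha_d delta) (gamma_d delta) p t) 0 T ->
  Rabs (RInt (fun t => f t * tanh_pulse (alpha_d delta) (gamma_d delta) p t) 0 T - f p)
    <= M1 * (2 * delta ^ 6 / (1 - delta ^ 6)) + M2 * delta.
Proof.
  intros Hd Hp0 HpT Hz Hder HM1 HM1_ge0 HM2 Hint.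
  set (a := alpha_d delta). set (g := gamma_d delta).
  assert (Ha : 0 < a) by (apply alpha_d_pos; lra).
  assert (Hg : 0 < g) by (apply gamma_d_pos; lra).
  assert (Hpd : forall x, p - delta < x < p + delta -> punct_interval T z x).
  { intros x Hx; split; [lra | intro; subst; lra]. }
  assert (Hclose : forall x, p - delta < x < p + delta -> Rabs (f x - f p) <= M2 * delta).
  { apply Rabs_sub_le_of_derive_bound with f'. intros y Hy. split; [| exact (HM2 y Hy)].
    exact (has_deriv_within_is_derive _ f _ _ y _ Hy Hpd (Hder y (Hpd y Hy))). }
  assert (Hstep : tanh_step a g p (p + delta) = g * tanh (a * delta) /\
                  tanh_step a g p (p - delta) = - (g * tanh (a * delta))).
  { unfold tanh_step. rewrite Ropp_mult_distr_r, <- tanh_opp.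
    split; do 2 f_equal; ring. }
  assert (Hmass : tanh_step a g p (p + delta) - tanh_step a g p (p - delta) = 1).
  { generalize (gamma_d_mass delta ltac:(lra) ltac:(lra)); fold a g. lra. }
  assert (Htails : tanh_step a g p (p - delta) - tanh_step a g p 0
                   + (tanh_step a g p T - tanh_step a g p (p + delta))
                   <= 2 * delta ^ 6 / (1 - delta ^ 6)).
  { rewrite <- (gamma_d_tail delta) by lra. fold a g. unfold tanh_step in *.
    destruct (tanh_bounds (a * (0 - p))), (tanh_bounds (a * (T - p))). nra. }
  eapply Rle_trans.
  { apply (RInt_weight_concentration (tanh_step a g p) (tanh_pulse a g p)
             (is_derive_tanh_step a g p) (continuous_tanh_pulse a g p)
             (fun t => proj1 (tanh_pulse_bounds a g p t ltac:(lra) ltac:(lra)))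
             f z M1 (M2 * delta) 0 T p delta);
      [lra | lra | lra | exact Hmass | exact Hint | | exact Hclose].
    intros x Hx Hxz. apply HM1. split; [lra | exact Hxz]. }
  apply Rplus_le_compat_r, Rmult_le_compat_l; assumption.
Qed.

Lemma Rabs_sub_sub_le (a b c d : R) : Rabs (a - b - c + d) <= Rabs (a - c) + Rabs (b - d).
Proof.
  replace (a - b - c + d) with ((a - c) + - (b - d)) by ring.
  rewrite <- (Rabs_Ropp (b - d)). apply Rabs_triang.
Qed.

Lemma one_sub_le_ln_inv (d : R) : 0 < d -> 1 - d <= ln (1 / d).
Proof.
  intro Hd. unfold Rdiv. rewrite Rmult_1_l, ln_Rinv by exact Hd.
  generalize (exp_ineq1_le (ln d)). rewrite exp_ln by exact Hd. lra.
Qed.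

Lemma two_pulse_error_le (T delta M1 M2 : R) :
  0 < delta < 1 -> 6 * delta <= T -> 0 <= M1 -> 0 <= M2 ->
  2 * (M1 * (2 * delta ^ 6 / (1 - delta ^ 6)) + M2 * delta)
    <= (T * M1 + 3 * ln (1 / delta) * M2) * (4 * delta / (1 - delta)).
Proof.
  intros Hd HT HM1 HM2.
  assert (Hd6 : delta ^ 6 <= delta * delta).
  { replace (delta ^ 6) with (delta * delta * delta ^ 4) by ring.
    assert (delta ^ 4 <= 1) by (left; apply pow_lt_1_compat; [lra | lia]).
    assert (0 <= delta * delta) by nra. nra. }
  assert (Hd6' : delta ^ 6 <= delta) by nra.
  assert (Htail : delta ^ 6 / (1 - delta ^ 6) <= T * delta / (1 - delta)).
  { unfold Rdiv. apply Rmult_le_compat; [apply pow_le; lra | | nra |].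
    - left; apply Rinv_0_lt_compat. lra.
    - apply Rinv_le_contravar; lra. }
  assert (Hmid : delta <= 6 * ln (1 / delta) * delta / (1 - delta)).
  { generalize (one_sub_le_ln_inv delta ltac:(lra)); intro HL.
    apply Rmult_le_reg_r with (1 - delta); [lra |].
    unfold Rdiv. rewrite Rmult_assoc, Rinv_l by lra. nra. }
  replace ((T * M1 + 3 * ln (1 / delta) * M2) * (4 * delta / (1 - delta)))
    with (4 * (M1 * (T * delta / (1 - delta))) + 2 * (M2 * (6 * ln (1 / delta) * delta / (1 - delta))))
    by (field; lra).
  replace (2 * (M1 * (2 * delta ^ 6 / (1 - delta ^ 6)) + M2 * delta))
    with (4 * (M1 * (delta ^ 6 / (1 - delta ^ 6))) + 2 * (M2 * delta))
    by (field; lra).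
  apply Rplus_le_compat; apply Rmult_le_compat_l; try lra; apply Rmult_le_compat_l; assumption.
Qed.

Theorem lemmaA3 (T delta z : R) (f f' : R -> R) (M1 M2 : R) :
  0 < T ->
  0 < delta -> delta < Rmin 1 (T / 2) ->
  3 * delta <= z <= T - 3 * delta ->
  C1_on (punct_interval T z) f f' ->
  (* M1 bounds ||f||_{L^oo([0,T])} (values off the null set {z}) *)
  (forall t, punct_interval T z t -> Rabs (f t) <= M1) ->
  (* M2 bounds ||f'||_{L^oo(B)} (values off the null set {z}) *)
  (forall t, setB T delta t -> t <> z -> Rabs (f' t) <= M2) ->
  Rabs (RInt (fun t => f t * Derive (chi T delta) t) 0 T
        - f (2 * delta) + f (T - 2 * delta))
  <= (T * M1 + 3 * ln (1 / delta) * M2) * (4 * delta / (1 - delta)).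
Proof.
  intros HT Hd Hdm Hz [Hder _] HM1 HM2.
  assert (Hd1 : delta < 1) by (eapply Rlt_le_trans; [exact Hdm | apply Rmin_l]).
  assert (HM1_ge0 : 0 <= M1).
  { eapply Rle_trans; [apply Rabs_pos | apply (HM1 0)]. split; lra. }
  assert (HM2_ge0 : 0 <= M2).
  { eapply Rle_trans; [apply Rabs_pos | apply (HM2 (2 * delta))]; [left |]; lra. }
  set (F := fun p t => f t * tanh_pulse (alpha_d delta) (gamma_d delta) p t).
  assert (Hint : forall p, ex_RInt (F p) 0 T).
  { intro p. apply (ex_RInt_mult_tanh_pulse T z M1 f f'); auto; try lra.
    - left; apply gamma_d_pos; lra.
    - left; apply alpha_d_pos; lra. }
  assert (Hleft := RInt_tanh_pulse_concentration T z delta (2 * delta) M1 M2 f f'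
    ltac:(lra) ltac:(lra) ltac:(lra) ltac:(lra) Hder HM1 HM1_ge0
    ltac:(intros t Ht; apply HM2; [left | ]; lra) (Hint _)).
  assert (Hright := RInt_tanh_pulse_concentration T z delta (T - 2 * delta) M1 M2 f f'
    ltac:(lra) ltac:(lra) ltac:(lra) ltac:(lra) Hder HM1 HM1_ge0
    ltac:(intros t Ht; apply HM2; [right | ]; lra) (Hint _)).
  assert (Hsplit : RInt (fun t => f t * Derive (chi T delta) t) 0 T
                   = RInt (F (2 * delta)) 0 T - RInt (F (T - 2 * delta)) 0 T).
  { rewrite <- (RInt_minus (V := R_CompleteNormedModule)) by apply Hint.
    apply RInt_ext. intros x _. rewrite Derive_chi. unfold F, minus, plus, opp; simpl; ring. }
  rewrite Hsplit. eapply Rle_trans; [apply Rabs_sub_sub_le |].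
  generalize (two_pulse_error_le T delta M1 M2 ltac:(lra) ltac:(lra) HM1_ge0 HM2_ge0).
  unfold F in *; lra.
Qed.
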